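(* Let $(X,M)$ be a supermidpoint set, with associated binary operation $m(x,y)=M(x,y,y,\dots)$. The following are equivalent: (1) $X$ is cancellative, i.e. $m(x,y)=m(x,z)$ implies $y=z$; (2) for all sequences $(x_i),(y_i),(z_i),(w_i)$ of elements of $X$, if $m_n(x_0,\dots,x_{n-1},z_n)=m_n(y_0,\dots,y_{n-1},w_n)$ for all $n\ge 0$, then $M(x_0,x_1,x_2,\dots)=M(y_0,y_1,y_2,\dots)$.
   Context: A supermidpoint set is a set $X$ with $M\colon X^\omega\to X$ (written $M_i\,x_i=M(x_0,x_1,\dots)$) satisfying: $M(x,x,x,\dots)=x$; $M(x,y,y,\dots)=M(y,x,x,\dots)$; $M_iM_j\,x_{ij}=M_jM_i\,x_{ij}$; $M_i\,x_i=M(x_0,M_i x_{i+1},M_i x_{i+1},\dots)$. Derived operations: $m_0(x)=x$, $m_n(x_0,\dots,x_n)=m(x_0,m_{n-1}(x_1,\dots,x_n))$ for $n\ge1$ (so for $n=0$ the hypothesis reads $z_0=w_0$). *)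

From Stdlib Require Import Arith.

Definition seq2 {X : Type} (x y : X) : nat -> X :=
  fun i => match i with 0 => x | _ => y end.

Definition shift {X : Type} (s : nat -> X) : nat -> X := fun i => s (S i).

Definition is_supermidpoint {X : Type} (M : (nat -> X) -> X) : Prop :=
  (forall x : X, M (fun _ => x) = x) /\
  (forall x y : X, M (seq2 x y) = M (seq2 y x)) /\
  (forall x : nat -> nat -> X,
      M (fun i => M (fun j => x i j)) = M (fun j => M (fun i => x i j))) /\
  (forall x : nat -> X, M x = M (seq2 (x 0) (M (shift x)))).

Definition mid {X : Type} (M : (nat -> X) -> X) (x y : X) : X := M (seq2 x y).

Fixpoint m_n {X : Type} (M : (nat -> X) -> X) (n : nat) (s : nat -> X) : X :=
  match n with
  | 0 => s 0
  | S k => mid M (s 0) (m_n M k (shift s))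
  end.

(* the finite sequence (x_0,...,x_{n-1}, z_n), padded arbitrarily after n *)
Definition prefix_then {X : Type} (n : nat) (x z : nat -> X) : nat -> X :=
  fun i => if i <? n then x i else z n.

Definition cancellative {X : Type} (M : (nat -> X) -> X) : Prop :=
  forall x y z : X, mid M x y = mid M x z -> y = z.

(* The binary operation m of a supermidpoint set is commutative, idempotent
   and medial, and M commutes with m pointwise.  Writing m_n(s_0,...,s_{n-1},p)
   as a left fold F_n(s, p), mediality gives
   m(F_n(s, p), F_n(t, q)) = F_n(m(s, t), m(p, q)).
   (1) => (2): comparing the hypothesis at n and n+1 through this identity
   and cancelling the common prefix yields, for every i,
   m(m(x_i, z_{i+1}), w_i) = m(m(y_i, w_{i+1}), z_i);
   applying M to both sides and unfolding M z = m(z_0, M(shift z)),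
   M w = m(w_0, M(shift w)) with z_0 = w_0 leaves an identity from which
   M x = M y follows by mediality and cancellation.
   (2) => (1): if m(y, a) = m(z, a), then y and z agree on every iterate
   a, m(y, a), m(y, m(y, a)), ..., so (2) applied to the constant sequences
   y and z gives y = M(y, y, ...) = M(z, z, ...) = z. *)
From Stdlib Require Import FunctionalExtensionality.

Fixpoint mid_fold {X : Type} (M : (nat -> X) -> X) (n : nat) (s : nat -> X) (p : X) : X :=
  match n with
  | 0 => p
  | S k => mid M (s 0) (mid_fold M k (shift s) p)
  end.

Lemma m_n_prefix_then {X : Type} (M : (nat -> X) -> X) (n : nat) (s z : nat -> X) :
  m_n M n (prefix_then n s z) = mid_fold M n s (z n).
Proof.
  revert s z; induction n as [|n IH]; intros s z.
  - reflexivity.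
  - exact (f_equal (mid M (s 0)) (IH (shift s) (shift z))).
Qed.

Lemma mid_fold_Sr {X : Type} (M : (nat -> X) -> X) (n : nat) (s : nat -> X) (p : X) :
  mid_fold M (S n) s p = mid_fold M n s (mid M (s n) p).
Proof.
  revert s; induction n as [|n IH]; intro s.
  - reflexivity.
  - exact (f_equal (mid M (s 0)) (IH (shift s))).
Qed.

Lemma mid_fold_const {X : Type} (M : (nat -> X) -> X) (n : nat) (y a : X) :
  mid_fold M n (fun _ => y) a = Nat.iter n (mid M y) a.
Proof. induction n as [|n IH]; [reflexivity | exact (f_equal (mid M y) IH)]. Qed.

Section Supermidpoint.

Variables (X : Type) (M : (nat -> X) -> X).
Hypothesis HM : is_supermidpoint M.

Lemma M_const (x : X) : M (fun _ => x) = x.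
Proof. apply HM. Qed.

Lemma M_unfold (s : nat -> X) : M s = mid M (s 0) (M (shift s)).
Proof. apply HM. Qed.

Lemma mid_comm (x y : X) : mid M x y = mid M y x.
Proof. apply HM. Qed.

Lemma mid_idem (x : X) : mid M x x = x.
Proof.
  unfold mid.
  replace (seq2 x x) with (fun _ : nat => x) by
    (apply functional_extensionality; intros [|i]; reflexivity).
  apply M_const.
Qed.

(* Instance of the exchange axiom for the doubly indexed family seq2 (s j) (t j) i. *)
Lemma M_mid (s t : nat -> X) :
  M (fun i => mid M (s i) (t i)) = mid M (M s) (M t).
Proof.
  destruct HM as [_ [_ [Hexch _]]].
  unfold mid.
  replace (seq2 (M s) (M t)) with (fun i => M (fun j => seq2 (s j) (t j) i)) by
    (apply functional_extensionality; intros [|i]; reflexivity).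
  apply Hexch.
Qed.

Lemma mid_medial (a b c d : X) :
  mid M (mid M a b) (mid M c d) = mid M (mid M a c) (mid M b d).
Proof.
  change (M (seq2 (mid M a b) (mid M c d)) = mid M (M (seq2 a c)) (M (seq2 b d))).
  rewrite <- M_mid. f_equal.
  apply functional_extensionality; intros [|i]; reflexivity.
Qed.

Lemma mid_fold_medial (n : nat) (s t : nat -> X) (p q : X) :
  mid M (mid_fold M n s p) (mid_fold M n t q)
  = mid_fold M n (fun i => mid M (s i) (t i)) (mid M p q).
Proof.
  revert s t; induction n as [|n IH]; intros s t.
  - reflexivity.
  - simpl. now rewrite mid_medial, IH.
Qed.

Lemma mid_step_agree (y z c : X) :
  mid M y c = mid M z c -> mid M y (mid M y c) = mid M z (mid M y c).
Proof.
  intro E.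
  transitivity (mid M (mid M y y) (mid M z c)); [now rewrite mid_idem, E|].
  transitivity (mid M (mid M z z) (mid M y c)); [|now rewrite mid_idem].
  now rewrite (mid_medial y y), (mid_medial z z), E, (mid_comm y z).
Qed.

Lemma mid_iter_agree (y z a : X) (n : nat) :
  mid M y a = mid M z a -> Nat.iter n (mid M y) a = Nat.iter n (mid M z) a.
Proof.
  intro E.
  assert (Hstep : forall k, mid M y (Nat.iter k (mid M y) a)
                            = mid M z (Nat.iter k (mid M y) a)).
  { induction k as [|k IH]; [exact E | exact (mid_step_agree _ _ _ IH)]. }
  induction n as [|n IH]; simpl; [reflexivity | now rewrite <- IH].
Qed.

Section Cancellative.

Hypothesis Hcan : cancellative M.

Lemma mid_cancel_r (x y z : X) : mid M y x = mid M z x -> y = z.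
Proof. rewrite (mid_comm y), (mid_comm z). apply Hcan. Qed.

Lemma mid_fold_inj (n : nat) (s : nat -> X) (p q : X) :
  mid_fold M n s p = mid_fold M n s q -> p = q.
Proof.
  revert s; induction n as [|n IH]; intros s E; [exact E|].
  exact (IH _ (Hcan _ _ _ E)).
Qed.

Lemma mid_fold_tails (x y z w : nat -> X) :
  (forall n, mid_fold M n x (z n) = mid_fold M n y (w n)) ->
  forall i, mid M (mid M (x i) (z (S i))) (w i)
            = mid M (mid M (y i) (w (S i))) (z i).
Proof.
  intros Heq i.
  assert (Hnext := Heq (S i)); rewrite !mid_fold_Sr in Hnext.
  assert (E : mid M (mid_fold M i x (mid M (x i) (z (S i)))) (mid_fold M i y (w i))
            = mid M (mid_fold M i y (mid M (y i) (w (S i)))) (mid_fold M i x (z i)))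
    by now rewrite Hnext, (Heq i).
  rewrite !mid_fold_medial in E.
  replace (fun j => mid M (y j) (x j)) with (fun j => mid M (x j) (y j)) in E
    by (apply functional_extensionality; intro; apply mid_comm).
  exact (mid_fold_inj _ _ _ _ E).
Qed.

Lemma mid_medial_cancel (a b c p q : X) :
  mid M (mid M a p) (mid M c q) = mid M (mid M b q) (mid M c p) -> a = b.
Proof.
  intro E.
  rewrite (mid_medial a), (mid_medial b), (mid_comm q p) in E.
  exact (mid_cancel_r _ _ _ (mid_cancel_r _ _ _ E)).
Qed.

Lemma M_eq_of_mid_fold_eq (x y z w : nat -> X) :
  (forall n, mid_fold M n x (z n) = mid_fold M n y (w n)) -> M x = M y.
Proof.
  intro Heq.
  assert (Htails := mid_fold_tails x y z w Heq).
  assert (E := f_equal M (functional_extensionality _ _ Htails)).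
  rewrite !M_mid in E.
  change (fun i => z (S i)) with (shift z) in E.
  change (fun i => w (S i)) with (shift w) in E.
  assert (Hhead : z 0 = w 0) by exact (Heq 0).
  rewrite (M_unfold w), (M_unfold z), <- Hhead in E.
  exact (mid_medial_cancel _ _ _ _ _ E).
Qed.

End Cancellative.

Lemma cancellative_of_M_eq :
  (forall x y z w : nat -> X,
     (forall n, mid_fold M n x (z n) = mid_fold M n y (w n)) -> M x = M y) ->
  cancellative M.
Proof.
  intros H a y z E.
  rewrite (mid_comm a y), (mid_comm a z) in E.
  rewrite <- (M_const y), <- (M_const z).
  apply (H _ _ (fun _ => a) (fun _ => a)); intro n.
  rewrite !mid_fold_const.
  exact (mid_iter_agree _ _ _ n E).
Qed.

End Supermidpoint.

Theorem mainTheorem6 (X : Type) (M : (nat -> X) -> X) :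
  is_supermidpoint M ->
  (cancellative M <->
   (forall x y z w : nat -> X,
      (forall n : nat, m_n M n (prefix_then n x z) = m_n M n (prefix_then n y w)) ->
      M x = M y)).
Proof.
  intro HM.
  assert (Hfold : forall x y z w : nat -> X,
            (forall n, m_n M n (prefix_then n x z) = m_n M n (prefix_then n y w))
            <-> (forall n, mid_fold M n x (z n) = mid_fold M n y (w n))).
  { intros x y z w; split; intros H n; specialize (H n);
      rewrite !m_n_prefix_then in *; exact H. }
  split.
  - intros Hcan x y z w Heq.
    exact (M_eq_of_mid_fold_eq X M HM Hcan x y z w (proj1 (Hfold x y z w) Heq)).
  - intro H.
    apply (cancellative_of_M_eq X M HM).
    intros x y z w Heq; exact (H x y z w (proj2 (Hfold x y z w) Heq)).
Qed.
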